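(* For every finite zero-set $\mathcal Z$ and every $(\alpha,\beta)\in[0,1]^2$, $$I(\alpha,\beta,\mathcal Z)\le(1-\max(\alpha,\beta))\,|\mathcal Z|\qquad\text{and}\qquad I(\alpha,\beta,\mathcal Z)\le2(1-\min(\alpha,\beta))\,\gamma(\mathcal Z).$$
   Context: $\mathbb Z_+=\{0,1,2,\dots\}$, $R_{a,b}=([0,a-1]\times[0,b-1])\cap\mathbb Z_+^2$; a zero-set is a union of such rectangles. $\mathrm{row}(x,A),\mathrm{col}(x,A)$ count points of $A$ on the horizontal/vertical line through $x$; $\mathcal T(A)=A\cup\{x\notin A:(\mathrm{row}(x,A),\mathrm{col}(x,A))\notin\mathcal Z\}$; $A$ spans if $\bigcup_t\mathcal T^t(A)=\mathbb Z_+^2$; $\gamma(\mathcal Z)$ is the minimal size of a finite spanning set. Large deviation rate: for $\alpha,\beta\ge0$, as $p\to0$ let integers $N,M\to\infty$ with $\log N\sim-\alpha\log p$, $\log M\sim-\beta\log p$; the initial set contains each point of $R_{N,M}$ independently with probability $p$; $I(\alpha,\beta,\mathcal Z)=\lim_{p\to0}\log P_p(\text{initial set spans})/\log p$ (this limit exists). *)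

From Stdlib Require Import Reals List Classical ClassicalDescription.
Import ListNotations.
Open Scope R_scope.

Definition point := (nat * nat)%type.
Definition pset := point -> Prop.

Definition rect (a b : nat) (x : point) : Prop :=
  (fst x < a)%nat /\ (snd x < b)%nat.

(* A finite zero-set, given as a duplicate-free list of its points:
   it is a union of rectangles R_{a,b}. *)
Definition is_finite_zero_set (Z : list point) : Prop :=
  NoDup Z /\
  forall z, In z Z -> exists a b, rect a b z /\ forall w, rect a b w -> In w Z.

Definition card_eq (P : nat -> Prop) (r : nat) : Prop :=
  exists l : list nat, NoDup l /\ length l = r /\ forall u, In u l <-> P u.

(* row(x,A): points of A on the horizontal line through x (same 2nd coord);
   col(x,A): points of A on the vertical line through x (same 1st coord).
   (row,col) in Z requires both counts to be finite and equal to a pair of Z;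
   an infinite count is never in Z. *)
Definition count_in_Z (Z : list point) (A : pset) (x : point) : Prop :=
  exists r c, In (r, c) Z /\
    card_eq (fun u => A (u, snd x)) r /\ card_eq (fun v => A (fst x, v)) c.

Definition Tstep (Z : list point) (A : pset) : pset :=
  fun x => A x \/ (~ A x /\ ~ count_in_Z Z A x).

Fixpoint Titer (Z : list point) (t : nat) (A : pset) : pset :=
  match t with O => A | S t' => Tstep Z (Titer Z t' A) end.

Definition spans (Z : list point) (A : pset) : Prop :=
  forall x, exists t, Titer Z t A x.

Definition set_of_list (l : list point) : pset := fun x => In x l.

Definition is_gamma (Z : list point) (g : nat) : Prop :=
  (exists A : list point, NoDup A /\ length A = g /\ spans Z (set_of_list A)) /\
  (forall A : list point, NoDup A -> spans Z (set_of_list A) -> (g <= length A)%nat).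

Definition rect_list (N M : nat) : list point := list_prod (seq 0 N) (seq 0 M).

Fixpoint masks (n : nat) : list (list bool) :=
  match n with
  | O => [[]]
  | S n' => map (cons true) (masks n') ++ map (cons false) (masks n')
  end.

Definition mask_set (pts : list point) (m : list bool) : pset :=
  fun x => exists i, nth_error pts i = Some x /\ nth_error m i = Some true.

Fixpoint mask_weight (p : R) (m : list bool) : R :=
  match m with
  | [] => 1
  | b :: m' => (if b then p else 1 - p) * mask_weight p m'
  end.

Definition indicator (P : Prop) : R :=
  if excluded_middle_informative P then 1 else 0.

(* P_p(initial set spans): each point of R_{N,M} included independently w.p. p *)
Definition Pspan (Z : list point) (N M : nat) (p : R) : R :=
  let pts := rect_list N M in
  fold_right Rplus 0
    (map (fun m => mask_weight p m * indicator (spans Z (mask_set pts m)))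
         (masks (length pts))).

Definition lim0 (f : R -> R) (L : R) : Prop :=
  forall eps, 0 < eps -> exists delta, 0 < delta /\
    forall p, 0 < p < delta -> Rabs (f p - L) < eps.

Definition to_infty0 (f : R -> R) : Prop :=
  forall K, exists delta, 0 < delta /\ forall p, 0 < p < delta -> K < f p.

(* Lower bounds on the spanning probability are upper bounds on [I], since [ln p < 0].  Each
   bound exhibits [K] disjoint blocks of at least [L] sites of the rectangle such that every
   initial set meeting all of them spans.  By independence this has probability
   [(1 - (1 - p)^L)^K >= (min(1, L p) / 2)^K], which is [p^(K (1 - a) + o(1))] when
   [L = p^(-a + o(1))].

   - [K = |Z|], with [Z] inside [[0, W)^2] and the rows cut into blocks of length [N / W] (or
     the columns into blocks of length [M / W]).  If for every [(r, c)] in [Z] the [r]-th block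
     of row [c] is hit, the rows fill up in order: once the rows below [c] are full, a site of
     row [c] has column count at least [c], so counts [(n, m)] in [Z] force [(n, c)] in [Z],
     whereas row [c] already contains [n + 1] occupied sites.
   - [K = 2 gamma], with blocks of length of order [min(N, M)]: take a minimal spanning set [Y]
     inside [[0, B)^2] and, for each [y] in [Y], a block in the row of [y] and one in its
     column, beyond [B] and pairwise disjoint.  By induction on time, every site outside [Y]
     infected from [Y] lies in the closure [H] of the initial set: in the row and column counts
     the far witnesses replace the points of [Y] injectively, unless the far part of the line
     already lies in [H].  As [H] is stable, a line whose far part lies in [H] lies in [H]
     entirely, and this also covers the points of [Y]. *)

From Stdlib Require Import Reals List.
From Stdlib Require Import Lia Lra Classical ClassicalDescription IndefiniteDescription FinFun.
Import ListNotations.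
Open Scope R_scope.

(** * Counting *)

Definition card_le (P : nat -> Prop) (r : nat) : Prop :=
  forall l, NoDup l -> (forall u, In u l -> P u) -> (length l <= r)%nat.

Definition injects (P Q : nat -> Prop) : Prop :=
  exists f : nat -> nat, (forall u, P u -> Q (f u)) /\
    (forall u v, P u -> P v -> f u = f v -> u = v).

Lemma card_eq_card_le P r : card_eq P r -> card_le P r.
Proof.
  intros [l0 [Hl0 [<- Hi]]] l Hl HP.
  apply NoDup_incl_length; auto. intros u Hu. apply Hi, HP, Hu.
Qed.

Lemma card_le_mono P r r' : (r <= r')%nat -> card_le P r -> card_le P r'.
Proof. intros Hr H l Hl HP. specialize (H l Hl HP). lia. Qed.

Lemma card_eq_of_card_le P r : card_le P r -> exists k, (k <= r)%nat /\ card_eq P k.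
Proof.
  intros Hle.
  enough (Hext : forall d l, NoDup l -> (forall u, In u l -> P u) ->
            (r - length l <= d)%nat -> exists k, (k <= r)%nat /\ card_eq P k)
    by (apply (Hext r []); [constructor | intros u [] | simpl; lia]).
  induction d as [|d IH]; intros l Hl HP Hd.
  all: destruct (classic (forall u, P u -> In u l)) as [Hall | Hout];
    [exists (length l); split; [apply Hle; auto | exists l; repeat split; auto] |].
  all: apply not_all_ex_not in Hout as [u Hu]; apply imply_to_and in Hu as [Pu Nu].
  all: assert (Hlen := Hle (u :: l) (NoDup_cons _ Nu Hl) ltac:(intros v [<-|Hv]; auto)).
  all: simpl in Hlen.
  - lia.
  - apply (IH (u :: l)); [constructor | intros v [<-|Hv] | simpl; lia]; auto.
Qed.

Lemma card_eq_iff P Q r : (forall u, P u <-> Q u) -> card_eq P r -> card_eq Q r.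
Proof.
  intros H [l [Hl [Hlen Hi]]]. exists l. repeat split; auto; intros Hu.
  - apply H, Hi, Hu.
  - apply Hi, H, Hu.
Qed.

Lemma card_eq_comp_involutive P (f : nat -> nat) r :
  (forall u, f (f u) = u) -> card_eq P r -> card_eq (fun u => P (f u)) r.
Proof.
  intros Hf [l [Hl [Hlen Hi]]]. exists (map f l). repeat split.
  - apply Injective_map_NoDup; auto. intros u v E. rewrite <- (Hf u), <- (Hf v), E. auto.
  - rewrite length_map. auto.
  - intros Hu. apply in_map_iff in Hu as [v [<- Hv]]. rewrite Hf. apply Hi, Hv.
  - intros Hu. apply in_map_iff. exists (f u). rewrite Hf. split; auto. apply Hi, Hu.
Qed.

Lemma card_eq_not_cofinite P B r : (forall w, (B <= w)%nat -> P w) -> ~ card_eq P r.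
Proof.
  intros H Hc. assert (Hl := card_eq_card_le P r Hc (seq B (S r)) (seq_NoDup _ _)).
  rewrite length_seq in Hl. enough (S r <= r)%nat by lia.
  apply Hl. intros u Hu. apply in_seq in Hu. apply H. lia.
Qed.

Lemma card_eq_injects P Q r : injects P Q -> card_eq Q r -> exists k, (k <= r)%nat /\ card_eq P k.
Proof.
  intros [f [Hf Hinj]] HQ. destruct (card_eq_of_card_le P r) as [k Hk]; [|exists k; auto].
  intros l Hl HP. rewrite <- (length_map f).
  apply (card_eq_card_le Q r HQ).
  - apply NoDup_map_NoDup_ForallPairs; auto. intros u v Hu Hv. apply Hinj; auto.
  - intros u Hu. apply in_map_iff in Hu as [v [<- Hv]]. auto.
Qed.

Lemma injects_subset (P Q : nat -> Prop) : (forall u, P u -> Q u) -> injects P Q.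
Proof. intros H. exists (fun u => u). auto. Qed.

Lemma distinct_preimages (h : nat -> nat) (P : nat -> Prop) n :
  (forall r, (r <= n)%nat -> exists u, h u = r /\ P u) ->
  exists l, NoDup l /\ length l = S n /\ forall u, In u l -> P u.
Proof.
  intros H.
  enough (Hl : exists l, NoDup l /\ length l = S n /\ forall u, In u l -> P u /\ (h u <= n)%nat)
    by (destruct Hl as [l [? [? Hl]]]; exists l; repeat split; auto; apply Hl).
  induction n as [|n IH].
  - destruct (H 0%nat (le_n _)) as [u [Hu Pu]].
    exists [u]. split; [|split]; auto.
    + repeat constructor. intros [].
    + intros v [<-|[]]. split; auto. lia.
  - destruct IH as [l [Hl [Hlen HP]]]; [intros r Hr; apply H; lia|].
    destruct (H (S n) (le_n _)) as [u [Hu Pu]].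
    exists (u :: l). split; [|split].
    + constructor; auto. intros Hin. apply HP in Hin. lia.
    + simpl. lia.
    + intros v [<-|Hv]; [split; auto; lia|]. apply HP in Hv. split; [apply Hv|lia].
Qed.

(** * The bootstrap dynamics *)

Lemma zero_set_down Z r c r' c' : is_finite_zero_set Z -> In (r, c) Z ->
  (r' <= r)%nat -> (c' <= c)%nat -> In (r', c') Z.
Proof.
  intros [_ HZ] Hin Hr Hc. destruct (HZ _ Hin) as [a [b [[Ha Hb] Hrect]]].
  apply Hrect. unfold rect in *; simpl in *. lia.
Qed.

Lemma list_point_bounded (l : list point) :
  exists B, forall z, In z l -> (fst z < B)%nat /\ (snd z < B)%nat.
Proof.
  induction l as [|z l [B IH]].
  - exists 0%nat. intros z [].
  - exists (S (Nat.max B (Nat.max (fst z) (snd z)))). intros w [<-|Hw]; [lia|].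
    destruct (IH w Hw). lia.
Qed.

Lemma count_in_Z_injects Z A A' x : is_finite_zero_set Z ->
  injects (fun u => A (u, snd x)) (fun u => A' (u, snd x)) ->
  injects (fun v => A (fst x, v)) (fun v => A' (fst x, v)) ->
  count_in_Z Z A' x -> count_in_Z Z A x.
Proof.
  intros HZ Hrow Hcol [r [c [Hin [Hr Hc]]]].
  destruct (card_eq_injects _ _ _ Hrow Hr) as [r' [Hr' Hr'c]].
  destruct (card_eq_injects _ _ _ Hcol Hc) as [c' [Hc' Hc'c]].
  exists r', c'. split; auto. eapply zero_set_down; eauto.
Qed.

Lemma Titer_mono Z A t t' x : (t <= t')%nat -> Titer Z t A x -> Titer Z t' A x.
Proof. induction 1; auto. intros Hx. left. auto. Qed.

Lemma Titer_of_initial Z A t x : A x -> Titer Z t A x.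
Proof. intros H. apply (Titer_mono Z A 0); [lia | exact H]. Qed.

Lemma Titer_S_of_not_count Z A t x :
  ~ count_in_Z Z (Titer Z t A) x -> Titer Z (S t) A x.
Proof. intros H. simpl. unfold Tstep. destruct (classic (Titer Z t A x)); auto. Qed.

Lemma Titer_relabel Z A (f g : nat -> nat) :
  (forall u, f (f u) = u) -> (forall v, g (g v) = v) ->
  (forall u v, A (f u, g v) <-> A (u, v)) ->
  forall t u v, Titer Z t A (f u, g v) <-> Titer Z t A (u, v).
Proof.
  intros Hf Hg HA. induction t as [|t IH]; intros u v; [apply HA|].
  assert (Hcount : count_in_Z Z (Titer Z t A) (f u, g v) <-> count_in_Z Z (Titer Z t A) (u, v)).
  { unfold count_in_Z; simpl.
    split; intros [r [c [Hin [Hr Hc]]]]; exists r, c; (split; [exact Hin|split]).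
    - apply (card_eq_comp_involutive _ f r Hf) in Hr. eapply card_eq_iff; [|exact Hr].
      intros w. apply IH.
    - apply (card_eq_comp_involutive _ g c Hg) in Hc. eapply card_eq_iff; [|exact Hc].
      intros w. apply IH.
    - apply (card_eq_comp_involutive _ f r Hf) in Hr. eapply card_eq_iff; [|exact Hr].
      intros w. rewrite <- IH, Hg. reflexivity.
    - apply (card_eq_comp_involutive _ g c Hg) in Hc. eapply card_eq_iff; [|exact Hc].
      intros w. rewrite <- IH, Hf. reflexivity. }
  simpl. unfold Tstep. rewrite IH, Hcount. reflexivity.
Qed.

Definition swap_nat (w w' a : nat) : nat :=
  if Nat.eqb a w then w' else if Nat.eqb a w' then w else a.

Lemma swap_nat_involutive w w' a : swap_nat w w' (swap_nat w w' a) = a.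
Proof.
  unfold swap_nat. destruct (Nat.eqb_spec a w), (Nat.eqb_spec a w');
    repeat match goal with |- context [Nat.eqb ?x ?y] => destruct (Nat.eqb_spec x y) end; lia.
Qed.

Lemma swap_nat_r w w' : swap_nat w w' w' = w.
Proof. unfold swap_nat. destruct (Nat.eqb_spec w' w); [|rewrite Nat.eqb_refl]; auto. Qed.


Lemma Titer_far_in_row Z Y B t w w' y :
  (forall s, In s Y -> (fst s < B)%nat) -> (B <= w)%nat -> (B <= w')%nat ->
  Titer Z t (set_of_list Y) (w, y) -> Titer Z t (set_of_list Y) (w', y).
Proof.
  intros HY Hw Hw' H.
  assert (Hinv : forall u v, set_of_list Y (swap_nat w w' u, v) <-> set_of_list Y (u, v)).
  { intros u v. unfold set_of_list, swap_nat.
    destruct (Nat.eqb_spec u w); [|destruct (Nat.eqb_spec u w')]; try reflexivity;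
      split; intros Hi; apply HY in Hi; simpl in Hi; lia. }
  rewrite <- (swap_nat_r w w') in H.
  exact (proj1 (Titer_relabel Z _ _ (fun v => v) (swap_nat_involutive w w')
                  (fun v => eq_refl) Hinv t w' y) H).
Qed.

Lemma Titer_far_in_col Z Y B t w w' x :
  (forall s, In s Y -> (snd s < B)%nat) -> (B <= w)%nat -> (B <= w')%nat ->
  Titer Z t (set_of_list Y) (x, w) -> Titer Z t (set_of_list Y) (x, w').
Proof.
  intros HY Hw Hw' H.
  assert (Hinv : forall u v, set_of_list Y (u, swap_nat w w' v) <-> set_of_list Y (u, v)).
  { intros u v. unfold set_of_list, swap_nat.
    destruct (Nat.eqb_spec v w); [|destruct (Nat.eqb_spec v w')]; try reflexivity;
      split; intros Hi; apply HY in Hi; simpl in Hi; lia. }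
  rewrite <- (swap_nat_r w w') in H.
  exact (proj1 (Titer_relabel Z _ (fun u => u) _ (fun u => eq_refl)
                  (swap_nat_involutive w w') Hinv t x w') H).
Qed.

Definition transpose (x : point) : point := (snd x, fst x).

Lemma In_map_transpose (Z : list point) x : In x (map transpose Z) <-> In (transpose x) Z.
Proof.
  rewrite in_map_iff. split.
  - intros [[a b] [<- Hin]]. exact Hin.
  - intros Hin. exists (transpose x). destruct x. auto.
Qed.

Lemma zero_set_transpose Z : is_finite_zero_set Z -> is_finite_zero_set (map transpose Z).
Proof.
  intros [Hnd HZ]. split.
  - apply Injective_map_NoDup; auto. intros [a b] [c d] E. injection E. congruence.
  - intros [r c] Hin. apply In_map_transpose in Hin.
    destruct (HZ _ Hin) as [a [b [[Ha Hb] Hrect]]]. exists b, a. split; [split; auto|].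
    intros [u v] [Hu Hv]. apply In_map_transpose, Hrect. split; auto.
Qed.

Lemma Titer_transpose Z A t x :
  Titer (map transpose Z) t (fun y => A (transpose y)) x <-> Titer Z t A (transpose x).
Proof.
  revert x. induction t as [|t IH]; intros x; [reflexivity|].
  assert (Hcount : count_in_Z (map transpose Z)
                     (Titer (map transpose Z) t (fun y => A (transpose y))) x
                   <-> count_in_Z Z (Titer Z t A) (transpose x)).
  { unfold count_in_Z. split; intros [r [c [Hin [Hr Hc]]]]; exists c, r.
    - apply (In_map_transpose Z (r, c)) in Hin.
      split; [exact Hin|split]; (eapply card_eq_iff; [|eassumption]); intros u; apply IH.
    - split; [apply (In_map_transpose Z (c, r)), Hin|split];
        (eapply card_eq_iff; [|eassumption]); intros u; symmetry; apply IH. }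
  simpl. unfold Tstep. rewrite IH, Hcount. reflexivity.
Qed.

(** * Closure of the dynamics *)

Definition closure (Z : list point) (A : pset) : pset := fun x => exists t, Titer Z t A x.

Lemma eventually_all {X} (Q : nat -> X -> Prop) (l : list X) :
  (forall t t' u, (t <= t')%nat -> Q t u -> Q t' u) ->
  (forall u, In u l -> exists t, Q t u) -> exists T, forall u, In u l -> Q T u.
Proof.
  intros Hmono. induction l as [|a l IH]; intros H; [exists 0%nat; intros u []|].
  destruct (H a (or_introl eq_refl)) as [ta Ha].
  destruct IH as [T HT]; [intros u Hu; apply H; right; exact Hu|].
  exists (Nat.max ta T). intros u [<-|Hu]; [apply (Hmono ta) | apply (Hmono T)]; auto; lia.
Qed.

Lemma increasing_union_stabilizes (P : nat -> nat -> Prop) B :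
  (forall t t' u, (t <= t')%nat -> P t u -> P t' u) -> (forall t, card_le (P t) B) ->
  exists T, forall t u, (T <= t)%nat -> (exists s, P s u) -> P t u.
Proof.
  intros Hmono Hle.
  destruct (card_eq_of_card_le (fun u => exists s, P s u) B) as [k [_ [l [_ [_ Hl]]]]].
  { intros l Hl HP. destruct (eventually_all P l Hmono HP) as [T HT]. exact (Hle T l Hl HT). }
  destruct (eventually_all P l Hmono) as [T HT]; [intros u Hu; apply Hl, Hu|].
  exists T. intros t u Ht Hu. apply (Hmono T); auto. apply HT, Hl, Hu.
Qed.

Lemma closure_stable Z A x : is_finite_zero_set Z ->
  ~ closure Z A x -> count_in_Z Z (closure Z A) x.
Proof.
  intros HZ Hx.
  assert (Hcount : forall t, count_in_Z Z (Titer Z t A) x).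
  { intros t. apply NNPP. intros Hn. apply Hx. exists (S t). apply Titer_S_of_not_count, Hn. }
  destruct (list_point_bounded Z) as [B HB].
  destruct (increasing_union_stabilizes (fun t u => Titer Z t A (u, snd x)) B) as [T1 HT1].
  { intros t t' u. apply Titer_mono. }
  { intros t. destruct (Hcount t) as [r [c [Hin [Hr _]]]].
    apply (card_le_mono _ r); [apply HB in Hin; simpl in Hin; lia | apply card_eq_card_le, Hr]. }
  destruct (increasing_union_stabilizes (fun t v => Titer Z t A (fst x, v)) B) as [T2 HT2].
  { intros t t' v. apply Titer_mono. }
  { intros t. destruct (Hcount t) as [r [c [Hin [_ Hc]]]].
    apply (card_le_mono _ c); [apply HB in Hin; simpl in Hin; lia | apply card_eq_card_le, Hc]. }
  destruct (Hcount (Nat.max T1 T2)) as [r [c [Hin [Hr Hc]]]].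
  exists r, c. split; [exact Hin|split].
  - eapply card_eq_iff; [|exact Hr].
    intros u. split; [intros Hu; eexists; exact Hu | apply HT1; lia].
  - eapply card_eq_iff; [|exact Hc].
    intros v. split; [intros Hv; eexists; exact Hv | apply HT2; lia].
Qed.

Lemma closure_full_row Z A B y : is_finite_zero_set Z ->
  (forall w, (B <= w)%nat -> closure Z A (w, y)) -> forall u, closure Z A (u, y).
Proof.
  intros HZ H u. apply NNPP. intros Hu.
  destruct (closure_stable Z A (u, y) HZ Hu) as [r [c [_ [Hr _]]]].
  exact (card_eq_not_cofinite _ B r H Hr).
Qed.

Lemma closure_full_col Z A B x : is_finite_zero_set Z ->
  (forall w, (B <= w)%nat -> closure Z A (x, w)) -> forall v, closure Z A (x, v).
Proof.
  intros HZ H v. apply NNPP. intros Hv.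
  destruct (closure_stable Z A (x, v) HZ Hv) as [r [c [_ [_ Hc]]]].
  exact (card_eq_not_cofinite _ B c H Hc).
Qed.

(** * Spanning criteria *)

Lemma row_blocks_span Z (h : nat -> nat) A : is_finite_zero_set Z ->
  (forall r c, In (r, c) Z -> exists u, h u = r /\ A (u, c)) -> spans Z A.
Proof.
  intros HZ HA.
  assert (Hrows : forall c j u, (j < c)%nat -> Titer Z c A (u, j)).
  { induction c as [|c IH]; intros j u Hj; [lia|].
    destruct (Nat.lt_ge_cases j c) as [Hlt|Hge]; [apply (Titer_mono Z A c); auto|].
    replace j with c by lia. apply Titer_S_of_not_count. intros [n [m [Hin [Hr Hc]]]].
    assert (Hm : (c <= m)%nat).
    { rewrite <- (length_seq c 0). apply (card_eq_card_le _ m Hc); [apply seq_NoDup|].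
      intros v Hv. apply in_seq in Hv. apply IH. lia. }
    destruct (distinct_preimages h (fun v => A (v, c)) n) as [l [Hl [Hlen HlA]]].
    { intros r Hr'. apply HA. eapply zero_set_down; eauto. }
    enough (length l <= n)%nat by lia.
    apply (card_eq_card_le _ n Hr l Hl). intros v Hv. apply Titer_of_initial, HlA, Hv. }
  intros [u v]. exists (S v). apply Hrows. lia.
Qed.

Lemma col_blocks_span Z (h : nat -> nat) A : is_finite_zero_set Z ->
  (forall r c, In (r, c) Z -> exists v, h v = c /\ A (r, v)) -> spans Z A.
Proof.
  intros HZ HA x.
  destruct (row_blocks_span (map transpose Z) h (fun y => A (transpose y))
              (zero_set_transpose Z HZ)) with (transpose x) as [t Ht].
  { intros r c Hin. apply (In_map_transpose Z (r, c)) in Hin. exact (HA c r Hin). }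
  exists t. apply (Titer_transpose Z A t (transpose x)) in Ht. destruct x. exact Ht.
Qed.

(* Send the points of [Y] to their far witnesses [c u] and the others to themselves.  A collision
   needs a point of [G] beyond [B]; then the whole far part is in [G], hence in [H], and [H] is
   everything. *)
Lemma injects_line (G H Y : nat -> Prop) B (c : nat -> nat) :
  (forall u, G u -> ~ Y u -> H u) ->
  (forall w, (B <= w)%nat -> ~ Y w) ->
  ((exists w, (B <= w)%nat /\ G w) -> forall w, (B <= w)%nat -> G w) ->
  ((forall w, (B <= w)%nat -> H w) -> forall u, H u) ->
  (forall u, Y u -> (B <= c u)%nat /\ H (c u)) ->
  (forall u v, Y u -> Y v -> c u = c v -> u = v) ->
  injects G H.
Proof.
  intros HGH Hfar Hspread Hfull Hc Hinj.
  destruct (classic (forall u, H u)) as [Hall | Hnot]; [apply injects_subset; auto|].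
  assert (Hempty : forall w, (B <= w)%nat -> ~ G w).
  { intros w Hw Gw. apply Hnot, Hfull. intros w' Hw'.
    apply HGH; [apply Hspread; eauto | apply Hfar; auto]. }
  exists (fun u => if excluded_middle_informative (Y u) then c u else u). split.
  - intros u Gu. destruct excluded_middle_informative; [apply Hc | apply HGH]; auto.
  - intros u v Gu Gv.
    destruct (excluded_middle_informative (Y u)) as [Yu|Yu],
             (excluded_middle_informative (Y v)) as [Yv|Yv]; intros E.
    + apply Hinj; auto.
    + exfalso. apply (Hempty v); [rewrite <- E; apply Hc, Yu | exact Gv].
    + exfalso. apply (Hempty u); [rewrite E; apply Hc, Yv | exact Gu].
    + exact E.
Qed.

Lemma choice_on {X Y} (D : X -> Prop) (R : X -> Y -> Prop) (y0 : Y) :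
  (forall x, D x -> exists y, R x y) -> exists f : X -> Y, forall x, D x -> R x (f x).
Proof.
  intros H. apply (functional_choice (fun x y => D x -> R x y)). intros x.
  destruct (classic (D x)) as [Hx|Hx]; [destruct (H x Hx) as [y Hy]; exists y | exists y0]; tauto.
Qed.

Lemma far_witnesses_span Z Y B (owner_row owner_col : nat -> point) A :
  is_finite_zero_set Z -> spans Z (set_of_list Y) ->
  (forall s, In s Y -> (fst s < B)%nat /\ (snd s < B)%nat) ->
  (forall s, In s Y -> exists u, (B <= u)%nat /\ owner_row u = s /\ A (u, snd s)) ->
  (forall s, In s Y -> exists v, (B <= v)%nat /\ owner_col v = s /\ A (fst s, v)) ->
  spans Z A.
Proof.
  intros HZ Hspan HB Hrow Hcol.
  destruct (choice_on _ _ 0%nat Hrow) as [cr Hcr].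
  destruct (choice_on _ _ 0%nat Hcol) as [cc Hcc].
  assert (Hfar : forall x, (B <= fst x \/ B <= snd x)%nat -> ~ In x Y)
    by (intros x Hx Hin; apply HB in Hin; lia).
  assert (Hout : forall t x, Titer Z t (set_of_list Y) x -> ~ In x Y -> closure Z A x).
  { induction t as [|t IH]; intros x Hx HxY; [contradiction|].
    destruct Hx as [Hx | [_ Hnew]]; [auto|].
    apply NNPP. intros HxA. apply Hnew.
    apply (count_in_Z_injects Z _ (closure Z A) x HZ); [| | apply closure_stable; auto].
    - apply (injects_line _ _ (fun u => In (u, snd x) Y) B (fun u => cr (u, snd x))).
      + intros u. apply IH.
      + intros w Hw. apply Hfar. simpl. auto.
      + intros [w [Hw Gw]] w' Hw'.
        exact (Titer_far_in_row Z Y B t w w' (snd x) (fun s Hs => proj1 (HB s Hs)) Hw Hw' Gw).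
      + apply closure_full_row; auto.
      + intros u Hu. destruct (Hcr _ Hu) as [Hb [_ HAu]].
        split; [exact Hb|]. exists 0%nat. exact HAu.
      + intros u v Hu Hv E.
        destruct (Hcr _ Hu) as [_ [Eu _]], (Hcr _ Hv) as [_ [Ev _]]. congruence.
    - apply (injects_line _ _ (fun v => In (fst x, v) Y) B (fun v => cc (fst x, v))).
      + intros v. apply IH.
      + intros w Hw. apply Hfar. simpl. auto.
      + intros [w [Hw Gw]] w' Hw'.
        exact (Titer_far_in_col Z Y B t w w' (fst x) (fun s Hs => proj2 (HB s Hs)) Hw Hw' Gw).
      + apply closure_full_col; auto.
      + intros v Hv. destruct (Hcc _ Hv) as [Hb [_ HAv]].
        split; [exact Hb|]. exists 0%nat. exact HAv.
      + intros u v Hu Hv E.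
        destruct (Hcc _ Hu) as [_ [Eu _]], (Hcc _ Hv) as [_ [Ev _]]. congruence. }
  intros [u v]. destruct (classic (In (u, v) Y)) as [Hx | Hx].
  - apply (closure_full_row Z A B v HZ). intros w Hw.
    destruct (Hspan (w, v)) as [t Ht]. apply (Hout t); [exact Ht|]. apply Hfar. simpl. auto.
  - destruct (Hspan (u, v)) as [t Ht]. exact (Hout t _ Ht Hx).
Qed.

(** * The probability that every block is hit *)

Definition expect (p : R) (n : nat) (f : list bool -> R) : R :=
  fold_right Rplus 0 (map (fun m => mask_weight p m * f m) (masks n)).

Lemma fold_Rplus_app (l l' : list R) :
  fold_right Rplus 0 (l ++ l') = fold_right Rplus 0 l + fold_right Rplus 0 l'.
Proof. induction l as [|a l IH]; simpl; [ring | rewrite IH; ring]. Qed.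

Lemma fold_Rplus_map_scale {X} (c : R) (g : X -> R) (l : list X) :
  fold_right Rplus 0 (map (fun x => c * g x) l) = c * fold_right Rplus 0 (map g l).
Proof. induction l as [|a l IH]; simpl; [ring | rewrite IH; ring]. Qed.

Lemma fold_Rplus_map_le {X} (g g' : X -> R) (l : list X) :
  (forall x, g x <= g' x) -> fold_right Rplus 0 (map g l) <= fold_right Rplus 0 (map g' l).
Proof. intros H. induction l as [|a l IH]; simpl; [lra | specialize (H a); lra]. Qed.

Lemma expect_O p f : expect p 0 f = f [].
Proof. unfold expect. simpl. ring. Qed.

Lemma expect_S p n f : expect p (S n) f =
  p * expect p n (fun m => f (true :: m)) + (1 - p) * expect p n (fun m => f (false :: m)).
Proof.
  unfold expect. simpl. rewrite map_app, fold_Rplus_app, !map_map, <- !fold_Rplus_map_scale.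
  f_equal; f_equal; apply map_ext; intros m; simpl; ring.
Qed.

Lemma expect_ext p n f g : (forall m, f m = g m) -> expect p n f = expect p n g.
Proof. intros H. unfold expect. f_equal. apply map_ext. intros m. rewrite H. reflexivity. Qed.

Lemma mask_weight_nonneg p m : 0 <= p <= 1 -> 0 <= mask_weight p m.
Proof. intros Hp. induction m as [|[] m IH]; simpl; [lra | nra | nra]. Qed.

Lemma expect_le p n f g : 0 <= p <= 1 -> (forall m, f m <= g m) -> expect p n f <= expect p n g.
Proof.
  intros Hp H. apply fold_Rplus_map_le. intros m.
  apply Rmult_le_compat_l; [apply mask_weight_nonneg, Hp | apply H].
Qed.

Lemma indicator_iff P Q : (P <-> Q) -> indicator P = indicator Q.
Proof.
  intros H. unfold indicator.
  destruct (excluded_middle_informative P), (excluded_middle_informative Q); tauto.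
Qed.

Lemma indicator_le P Q : (P -> Q) -> indicator P <= indicator Q.
Proof.
  intros H. unfold indicator.
  destruct (excluded_middle_informative P), (excluded_middle_informative Q); try lra; tauto.
Qed.

Definition prod_list {X} (g : X -> R) (l : list X) : R := fold_right Rmult 1 (map g l).

Lemma prod_list_ext {X} (g g' : X -> R) l :
  (forall k, In k l -> g k = g' k) -> prod_list g l = prod_list g' l.
Proof.
  intros H. unfold prod_list. f_equal. apply map_ext_in. exact H.
Qed.

Lemma prod_list_remove {X} (eqd : forall a b : X, {a = b} + {a <> b}) (g : X -> R) l j :
  NoDup l -> In j l -> prod_list g l = g j * prod_list g (remove eqd j l).
Proof.
  unfold prod_list. induction l as [|a l IH]; intros Hl Hj; [destruct Hj|].
  apply NoDup_cons_iff in Hl as [Ha Hl]. simpl.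
  destruct (eqd j a) as [<-|Hne].
  - rewrite notin_remove by exact Ha. reflexivity.
  - destruct Hj as [->|Hj]; [congruence|]. simpl. rewrite IH by auto. ring.
Qed.

Lemma prod_list_ge_pow {X} (g : X -> R) (l : list X) c :
  0 <= c -> (forall k, In k l -> c <= g k) -> c ^ length l <= prod_list g l.
Proof.
  unfold prod_list. induction l as [|a l IH]; intros Hc H; simpl; [lra|].
  apply Rmult_le_compat; [exact Hc | apply pow_le, Hc | apply H; left; auto |].
  apply IH; auto. intros k Hk. apply H. right. exact Hk.
Qed.

Lemma pow_le_one x n : 0 <= x <= 1 -> x ^ n <= 1.
Proof.
  intros Hx. induction n as [|n IH]; simpl; [lra|].
  assert (0 <= x ^ n) by (apply pow_le; lra). nra.
Qed.

Lemma one_minus_pow_nonneg p L : 0 <= p <= 1 -> 0 <= 1 - (1 - p) ^ L.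
Proof. intros Hp. assert ((1 - p) ^ L <= 1) by (apply pow_le_one; lra). lra. Qed.

Lemma one_minus_pow_mono p L L' : 0 <= p <= 1 -> (L <= L')%nat ->
  1 - (1 - p) ^ L <= 1 - (1 - p) ^ L'.
Proof.
  intros Hp HL. replace L' with (L + (L' - L))%nat by lia. rewrite pow_add.
  assert (0 <= (1 - p) ^ L) by (apply pow_le; lra).
  assert (0 <= (1 - p) ^ (L' - L) <= 1) by (split; [apply pow_le | apply pow_le_one]; lra).
  nra.
Qed.

Definition hits_every {T} (labels : list T) (block : point -> option T) (A : pset) : Prop :=
  forall k, In k labels -> exists x, block x = Some k /\ A x.

Definition remaining {T} (eqd : forall a b : T, {a = b} + {a <> b})
  (b : option T) (labels : list T) : list T :=
  match b with Some j => remove eqd j labels | None => labels end.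

Lemma In_remaining {T} eqd (b : option T) labels k :
  In k (remaining eqd b labels) <-> In k labels /\ b <> Some k.
Proof.
  destruct b as [j|]; simpl; [|split; [intros H; split; [exact H | discriminate] | tauto]].
  split.
  - intros Hk. apply in_remove in Hk as [Hk Hne]. split; congruence.
  - intros [Hk Hne]. apply in_in_remove; congruence.
Qed.

Lemma NoDup_remaining {T} eqd (b : option T) labels :
  NoDup labels -> NoDup (remaining eqd b labels).
Proof. destruct b; simpl; auto. rewrite <- remove_alt. apply NoDup_filter. Qed.

Lemma mask_set_cons x xs b m y :
  mask_set (x :: xs) (b :: m) y <-> (b = true /\ y = x) \/ mask_set xs m y.
Proof.
  unfold mask_set. split.
  - intros [[|i] [Hx Hm]]; simpl in *; [left; split; congruence | right; exists i; auto].
  - intros [[-> ->]|[i Hi]]; [exists 0%nat | exists (S i)]; auto.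
Qed.

Lemma hits_every_cons {T} eqd (labels : list T) block x xs b m :
  hits_every labels block (mask_set (x :: xs) (b :: m)) <->
  hits_every (if b then remaining eqd (block x) labels else labels) block (mask_set xs m).
Proof.
  assert (Hin : forall k, In k (if b then remaining eqd (block x) labels else labels) <->
                          In k labels /\ ~ (b = true /\ block x = Some k)).
  { intros k. destruct b; [rewrite In_remaining|]; intuition congruence. }
  unfold hits_every. split.
  - intros H k Hk. apply Hin in Hk as [Hk Hnot].
    destruct (H k Hk) as [y [Hy Hm]]. apply mask_set_cons in Hm as [[-> ->]|Hm]; eauto.
    exfalso. apply Hnot. auto.
  - intros H k Hk. destruct (classic (b = true /\ block x = Some k)) as [[-> Hx]|Hnot].
    + exists x. split; [exact Hx|]. apply mask_set_cons. auto.
    + destruct (H k (proj2 (Hin k) (conj Hk Hnot))) as [y [Hy Hm]].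
      exists y. split; [exact Hy|]. apply mask_set_cons. auto.
Qed.

Definition labelled {T} (eqd : forall a b : T, {a = b} + {a <> b})
  (block : point -> option T) (k : T) (x : point) : bool :=
  match block x with Some j => if eqd j k then true else false | None => false end.

Definition block_size {T} eqd (block : point -> option T) (xs : list point) (k : T) : nat :=
  length (filter (labelled eqd block k) xs).

Lemma prod_block_size_cons {T} eqd p (block : point -> option T) x xs labels : NoDup labels ->
  p * prod_list (fun k => 1 - (1 - p) ^ block_size eqd block xs k) (remaining eqd (block x) labels)
  + (1 - p) * prod_list (fun k => 1 - (1 - p) ^ block_size eqd block xs k) labels
  = prod_list (fun k => 1 - (1 - p) ^ block_size eqd block (x :: xs) k) labels.
Proof.
  intros Hl.
  set (g := fun k => 1 - (1 - p) ^ block_size eqd block xs k).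
  set (g' := fun k => 1 - (1 - p) ^ block_size eqd block (x :: xs) k).
  assert (Hsize : forall k, block_size eqd block (x :: xs) k =
                    ((if labelled eqd block k x then 1 else 0) + block_size eqd block xs k)%nat)
    by (intros k; unfold block_size; simpl; destruct labelled; reflexivity).
  assert (Hother : forall k, block x <> Some k -> g' k = g k).
  { intros k Hk. unfold g'. rewrite Hsize. unfold labelled, g.
    destruct (block x) as [j|]; [destruct (eqd j k); [congruence|]|]; reflexivity. }
  destruct (block x) as [j|] eqn:Hbx; simpl remaining.
  - destruct (classic (In j labels)) as [Hj|Hj].
    + rewrite (prod_list_remove eqd g _ j Hl Hj), (prod_list_remove eqd g' _ j Hl Hj).
      rewrite (prod_list_ext g' g (remove eqd j labels))
        by (intros k Hk; apply in_remove in Hk as [_ Hk]; apply Hother; congruence).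
      unfold g'. rewrite Hsize. unfold labelled, g. rewrite Hbx.
      destruct (eqd j j); [|congruence]. simpl. ring.
    + rewrite notin_remove by exact Hj.
      rewrite (prod_list_ext g' g labels) by (intros k Hk; apply Hother; congruence). ring.
  - rewrite (prod_list_ext g' g labels) by (intros k Hk; apply Hother; congruence). ring.
Qed.

Lemma expect_hits_every {T} eqd p (block : point -> option T) xs : forall labels, NoDup labels ->
  expect p (length xs) (fun m => indicator (hits_every labels block (mask_set xs m))) =
  prod_list (fun k => 1 - (1 - p) ^ block_size eqd block xs k) labels.
Proof.
  induction xs as [|x xs IH]; intros labels Hl.
  - rewrite expect_O. unfold indicator.
    destruct labels as [|k labels]; destruct excluded_middle_informative as [Hh|Hn].
    + reflexivity.
    + exfalso. apply Hn. intros k [].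
    + exfalso. destruct (Hh k (or_introl eq_refl)) as [y [_ [[|i] [Hi _]]]]; discriminate.
    + unfold prod_list. simpl. ring.
  - simpl length. rewrite expect_S, <- prod_block_size_cons by exact Hl.
    rewrite (expect_ext p _
               (fun m => indicator (hits_every labels block (mask_set (x :: xs) (true :: m))))
               (fun m => indicator (hits_every (remaining eqd (block x) labels)
                                      block (mask_set xs m))))
      by (intros m; apply indicator_iff, (hits_every_cons eqd labels block x xs true m)).
    rewrite (expect_ext p _
               (fun m => indicator (hits_every labels block (mask_set (x :: xs) (false :: m))))
               (fun m => indicator (hits_every labels block (mask_set xs m))))
      by (intros m; apply indicator_iff, (hits_every_cons eqd labels block x xs false m)).
    rewrite !IH by (try apply NoDup_remaining; exact Hl). reflexivity.
Qed.

Lemma block_size_ge {T} eqd (block : point -> option T) xs k (l : list point) :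
  NoDup l -> (forall x, In x l -> In x xs /\ block x = Some k) ->
  (length l <= block_size eqd block xs k)%nat.
Proof.
  intros Hl H. apply NoDup_incl_length; [exact Hl|]. intros x Hx.
  destruct (H x Hx) as [Hin Hb]. apply filter_In. split; [exact Hin|].
  unfold labelled. rewrite Hb. destruct (eqd k k); congruence.
Qed.

Lemma In_rect_list N M x : In x (rect_list N M) <-> rect N M x.
Proof.
  destruct x as [u v]. unfold rect_list, rect. rewrite (in_prod_iff _ _ u v), !in_seq. simpl. lia.
Qed.

Lemma Pspan_ge_blocks {T} Z N M p (labels : list T) (block : point -> option T) L :
  0 <= p <= 1 -> NoDup labels ->
  (forall k, In k labels -> exists l, NoDup l /\ (L <= length l)%nat /\
       forall x, In x l -> rect N M x /\ block x = Some k) ->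
  (forall A, hits_every labels block A -> spans Z A) ->
  (1 - (1 - p) ^ L) ^ length labels <= Pspan Z N M p.
Proof.
  intros Hp Hl Hblocks Hspan.
  set (eqd := fun a b : T => excluded_middle_informative (a = b)).
  apply Rle_trans with (expect p (length (rect_list N M))
    (fun m => indicator (hits_every labels block (mask_set (rect_list N M) m)))).
  - rewrite (expect_hits_every eqd) by exact Hl.
    apply prod_list_ge_pow; [apply one_minus_pow_nonneg, Hp|].
    intros k Hk. destruct (Hblocks k Hk) as [l [Hnd [HL Hx]]].
    apply one_minus_pow_mono; [exact Hp|]. eapply Nat.le_trans; [exact HL|].
    apply block_size_ge; [exact Hnd|]. intros x Hin.
    destruct (Hx x Hin). split; auto. apply In_rect_list. auto.
  - apply expect_le; [exact Hp|]. intros m. apply indicator_le, Hspan.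
Qed.

(** * Three families of blocks *)

Lemma div_eq_of_bounds u L r : (r * L <= u < r * L + L)%nat -> (u / L)%nat = r.
Proof. intros H. symmetry. apply (Nat.div_unique u L r (u - r * L)); lia. Qed.

Lemma NoDup_list_prod {X Y} (l : list X) (l' : list Y) :
  NoDup l -> NoDup l' -> NoDup (list_prod l l').
Proof.
  induction 1 as [|a l Ha Hl IH]; intros Hl'; simpl; [constructor|].
  apply NoDup_app; [| apply IH, Hl' |].
  - apply Injective_map_NoDup; [intros b b' E; congruence | exact Hl'].
  - intros [a' b] H1 H2. apply in_map_iff in H1 as [b' [E _]].
    apply in_prod_iff in H2 as [H2 _]. injection E as <- _. contradiction.
Qed.

Lemma NoDup_map_seq (f : nat -> point) a L :
  (forall u v, f u = f v -> u = v) -> NoDup (map f (seq a L)).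
Proof. intros Hf. apply Injective_map_NoDup; [exact Hf | apply seq_NoDup]. Qed.

Lemma Pspan_ge_rows Z N M p W L : is_finite_zero_set Z -> 0 <= p <= 1 ->
  (forall z, In z Z -> (fst z < W)%nat /\ (snd z < W)%nat) ->
  (W * L <= N)%nat -> (W <= M)%nat ->
  (1 - (1 - p) ^ L) ^ length Z <= Pspan Z N M p.
Proof.
  intros HZ Hp HW HN HM.
  apply (Pspan_ge_blocks Z N M p Z (fun x => Some ((fst x / L)%nat, snd x)) L Hp (proj1 HZ)).
  - intros [r c] Hin. destruct (HW _ Hin) as [Hr Hc]. simpl in Hr, Hc.
    exists (map (fun u => (u, c)) (seq (r * L) L)). split; [|split].
    + apply NoDup_map_seq. congruence.
    + rewrite length_map, length_seq. lia.
    + intros x Hx. apply in_map_iff in Hx as [u [<- Hu]]. apply in_seq in Hu.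
      split; [unfold rect; simpl; nia|].
      simpl. rewrite (div_eq_of_bounds u L r) by lia. reflexivity.
  - intros A HA. apply (row_blocks_span Z (fun u => u / L)%nat A HZ).
    intros r c Hin. destruct (HA _ Hin) as [[u v] [Hb Hx]]. injection Hb as <- <-. eauto.
Qed.

Lemma Pspan_ge_cols Z N M p W L : is_finite_zero_set Z -> 0 <= p <= 1 ->
  (forall z, In z Z -> (fst z < W)%nat /\ (snd z < W)%nat) ->
  (W <= N)%nat -> (W * L <= M)%nat ->
  (1 - (1 - p) ^ L) ^ length Z <= Pspan Z N M p.
Proof.
  intros HZ Hp HW HN HM.
  apply (Pspan_ge_blocks Z N M p Z (fun x => Some (fst x, (snd x / L)%nat)) L Hp (proj1 HZ)).
  - intros [r c] Hin. destruct (HW _ Hin) as [Hr Hc]. simpl in Hr, Hc.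
    exists (map (fun v => (r, v)) (seq (c * L) L)). split; [|split].
    + apply NoDup_map_seq. congruence.
    + rewrite length_map, length_seq. lia.
    + intros x Hx. apply in_map_iff in Hx as [v [<- Hv]]. apply in_seq in Hv.
      split; [unfold rect; simpl; nia|].
      simpl. rewrite (div_eq_of_bounds v L c) by lia. reflexivity.
  - intros A HA. apply (col_blocks_span Z (fun v => v / L)%nat A HZ).
    intros r c Hin. destruct (HA _ Hin) as [[u v] [Hb Hx]]. injection Hb as <- <-. eauto.
Qed.

(* Beyond [B] the lines are cut into consecutive intervals of length [L], the [i]-th one owned
   by the [i]-th point [s] of [Y]; label [(s, true)] marks the owned sites of the row of [s] and
   [(s, false)] those of its column. *)
Definition far_owner (Y : list point) (B L u : nat) : point :=
  nth ((u - B) / L) Y (0%nat, 0%nat).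

Definition far_block (Y : list point) (B L : nat) (x : point) : option (point * bool) :=
  if (Nat.leb B (fst x) && Nat.eqb (snd (far_owner Y B L (fst x))) (snd x))%bool
  then Some (far_owner Y B L (fst x), true)
  else if (Nat.leb B (snd x) && Nat.eqb (fst (far_owner Y B L (snd x))) (fst x))%bool
  then Some (far_owner Y B L (snd x), false)
  else None.

Lemma far_block_row Y B L x s : far_block Y B L x = Some (s, true) ->
  (B <= fst x)%nat /\ far_owner Y B L (fst x) = s /\ snd x = snd s.
Proof.
  unfold far_block.
  destruct (Nat.leb B (fst x) && Nat.eqb (snd (far_owner Y B L (fst x))) (snd x))%bool eqn:E1;
    [|destruct (Nat.leb B (snd x) && Nat.eqb (fst (far_owner Y B L (snd x))) (fst x))%bool;
      discriminate].
  intros Hb. injection Hb as <-. apply andb_prop in E1 as [E1 E2].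
  apply Nat.leb_le in E1. apply Nat.eqb_eq in E2. auto.
Qed.

Lemma far_block_col Y B L x s : far_block Y B L x = Some (s, false) ->
  (B <= snd x)%nat /\ far_owner Y B L (snd x) = s /\ fst x = fst s.
Proof.
  unfold far_block.
  destruct (Nat.leb B (fst x) && Nat.eqb (snd (far_owner Y B L (fst x))) (snd x))%bool;
    [discriminate|].
  destruct (Nat.leb B (snd x) && Nat.eqb (fst (far_owner Y B L (snd x))) (fst x))%bool eqn:E1;
    [|discriminate].
  intros Hb. injection Hb as <-. apply andb_prop in E1 as [E1 E2].
  apply Nat.leb_le in E1. apply Nat.eqb_eq in E2. auto.
Qed.

Lemma Pspan_ge_far_witnesses Z N M p Y B L : is_finite_zero_set Z -> 0 <= p <= 1 ->
  NoDup Y -> spans Z (set_of_list Y) ->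
  (forall s, In s Y -> (fst s < B)%nat /\ (snd s < B)%nat) ->
  (B + length Y * L <= N)%nat -> (B + length Y * L <= M)%nat ->
  (1 - (1 - p) ^ L) ^ (2 * length Y) <= Pspan Z N M p.
Proof.
  intros HZ Hp HY Hspan HB HN HM.
  replace (2 * length Y)%nat with (length (list_prod Y [true; false]))
    by (rewrite length_prod; simpl; lia).
  apply (Pspan_ge_blocks Z N M p _ (far_block Y B L) L Hp).
  - apply NoDup_list_prod; [exact HY|]. repeat constructor; simpl; intuition discriminate.
  - intros [s b] Hin. apply in_prod_iff in Hin as [Hs Hb].
    destruct (In_nth Y s (0%nat, 0%nat) Hs) as [i [Hi Hnth]].
    destruct (HB s Hs) as [Hs1 Hs2].
    assert (Howner : forall u, (B + i * L <= u < B + i * L + L)%nat -> far_owner Y B L u = s).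
    { intros u Hu. unfold far_owner. rewrite (div_eq_of_bounds (u - B) L i) by lia. exact Hnth. }
    destruct Hb as [<-|[<-|[]]].
    + exists (map (fun u => (u, snd s)) (seq (B + i * L) L)). split; [|split].
      * apply NoDup_map_seq. congruence.
      * rewrite length_map, length_seq. lia.
      * intros x Hx. apply in_map_iff in Hx as [u [<- Hu]]. apply in_seq in Hu.
        split; [unfold rect; simpl; nia|]. unfold far_block. simpl. rewrite Howner by lia.
        rewrite (proj2 (Nat.leb_le B u)) by lia. rewrite Nat.eqb_refl. reflexivity.
    + exists (map (fun v => (fst s, v)) (seq (B + i * L) L)). split; [|split].
      * apply NoDup_map_seq. congruence.
      * rewrite length_map, length_seq. lia.
      * intros x Hx. apply in_map_iff in Hx as [v [<- Hv]]. apply in_seq in Hv.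
        split; [unfold rect; simpl; nia|]. unfold far_block. simpl.
        rewrite (proj2 (Nat.leb_gt B (fst s))) by lia. simpl. rewrite Howner by lia.
        rewrite (proj2 (Nat.leb_le B v)) by lia. rewrite Nat.eqb_refl. reflexivity.
  - intros A HA. apply (far_witnesses_span Z Y B (far_owner Y B L) (far_owner Y B L) A HZ Hspan HB).
    + intros s Hs. destruct (HA (s, true)) as [x [Hb Hx]]; [apply in_prod; simpl; auto|].
      apply far_block_row in Hb as [Hu [Ho Hv]].
      exists (fst x). destruct x. simpl in *. subst. auto.
    + intros s Hs. destruct (HA (s, false)) as [x [Hb Hx]]; [apply in_prod; simpl; auto|].
      apply far_block_col in Hb as [Hv [Ho Hu]].
      exists (snd x). destruct x. simpl in *. subst. auto.
Qed.

(** * Asymptotics as p tends to 0 *)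

Definition near0 (P : R -> Prop) : Prop := exists d, 0 < d /\ forall p, 0 < p < d -> P p.

Lemma near0_and (P Q : R -> Prop) : near0 P -> near0 Q -> near0 (fun p => P p /\ Q p).
Proof.
  intros [d [Hd HP]] [d' [Hd' HQ]]. exists (Rmin d d'). split; [apply Rmin_pos; auto|].
  intros p Hp. pose proof (Rmin_l d d'). pose proof (Rmin_r d d').
  split; [apply HP | apply HQ]; lra.
Qed.

Lemma near0_impl (P Q : R -> Prop) : (forall p, 0 < p -> P p -> Q p) -> near0 P -> near0 Q.
Proof. intros H [d [Hd HP]]. exists d. split; auto. intros p Hp. apply H, HP; lra. Qed.

Lemma near0_lt d : 0 < d -> near0 (fun p => p < d).
Proof. intros Hd. exists d. split; auto. intros p Hp. lra. Qed.

Lemma near0_neg_ln_large C eps : 0 < eps -> near0 (fun p => 0 < - ln p /\ C / - ln p <= eps).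
Proof.
  intros He. exists (exp (- (Rabs C / eps))). split; [apply exp_pos|]. intros p [Hp Hpd].
  apply ln_increasing in Hpd; [|exact Hp]. rewrite ln_exp in Hpd.
  assert (HCe : 0 <= Rabs C / eps)
    by (unfold Rdiv; apply Rmult_le_pos; [apply Rabs_pos | left; apply Rinv_0_lt_compat, He]).
  assert (HC : Rabs C <= eps * - ln p).
  { replace (Rabs C) with (eps * (Rabs C / eps)) by (field; lra).
    apply Rmult_le_compat_l; lra. }
  split; [lra|]. pose proof (Rle_abs C).
  unfold Rdiv. apply (Rmult_le_reg_r (- ln p)); [lra|].
  rewrite Rmult_assoc, Rinv_l by lra. lra.
Qed.

Lemma lim0_le (y : R -> R) I U : lim0 y I ->
  (forall eps, 0 < eps -> near0 (fun p => y p <= U + eps)) -> I <= U.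
Proof.
  intros Hy H. apply Rnot_lt_le. intros HUI.
  assert (He : 0 < (I - U) / 2) by lra.
  destruct (near0_and (fun p => Rabs (y p - I) < (I - U) / 2) _ (Hy _ He) (H _ He))
    as [d [Hd Hnear]].
  destruct (Hnear (d / 2) ltac:(lra)) as [Hclose Hle]. apply Rabs_def2 in Hclose. lra.
Qed.

Lemma lim0_near_ext f g L : near0 (fun p => f p = g p) -> lim0 f L -> lim0 g L.
Proof.
  intros Hfg Hf eps He.
  apply (near0_impl (fun p => f p = g p /\ Rabs (f p - L) < eps)).
  - intros p _ [E H]. rewrite <- E. exact H.
  - apply near0_and; [exact Hfg | apply Hf, He].
Qed.

Lemma lim0_Rmin f g a b : lim0 f a -> lim0 g b ->
  lim0 (fun p => Rmin (f p) (g p)) (Rmin a b).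
Proof.
  intros Hf Hg eps He.
  apply (near0_impl (fun p => Rabs (f p - a) < eps /\ Rabs (g p - b) < eps)).
  - intros p _ [H1 H2]. apply Rabs_def2 in H1. apply Rabs_def2 in H2.
    apply Rabs_def1; unfold Rmin; destruct (Rle_dec (f p) (g p)), (Rle_dec a b); lra.
  - apply near0_and; [apply Hf | apply Hg]; exact He.
Qed.

Lemma ln_le_ln x y : 0 < x -> x <= y -> ln x <= ln y.
Proof. intros Hx [Hxy|<-]; [left; apply ln_increasing; auto | right; reflexivity]. Qed.

Lemma ln_Rmin_div x y D : 0 < x -> 0 < y -> 0 < D -> ln (Rmin x y) / D = Rmin (ln x / D) (ln y / D).
Proof.
  intros Hx Hy HD. unfold Rmin.
  assert (HDi : 0 < / D) by (apply Rinv_0_lt_compat, HD).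
  assert (Hmono : forall u v, 0 < u -> u <= v -> ln u / D <= ln v / D)
    by (intros u v Hu Huv; apply Rmult_le_compat_r; [lra | apply ln_le_ln; auto]).
  destruct (Rle_dec x y) as [Hxy|Hxy], (Rle_dec (ln x / D) (ln y / D)) as [Hl|Hl]; auto.
  - exfalso. apply Hl, Hmono; auto.
  - apply Rle_antisym; [apply Hmono|]; lra.
Qed.

Lemma INR_min a b : INR (Nat.min a b) = Rmin (INR a) (INR b).
Proof.
  destruct (Nat.le_ge_cases a b) as [H|H].
  - rewrite Nat.min_l, Rmin_left by (auto; apply le_INR; auto). reflexivity.
  - rewrite Nat.min_r, Rmin_right by (auto; apply le_INR; auto). reflexivity.
Qed.

Lemma INR_div_ge n W : (1 <= W <= n)%nat -> / (2 * INR W) * INR n <= INR (n / W).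
Proof.
  intros HW.
  assert (Hn : (n <= 2 * W * (n / W))%nat).
  { pose proof (Nat.div_mod n W ltac:(lia)).
    pose proof (Nat.mod_bound_pos n W ltac:(lia) ltac:(lia)).
    assert (1 <= n / W)%nat by (apply Nat.div_le_lower_bound; lia). nia. }
  apply le_INR in Hn. rewrite !mult_INR in Hn. simpl (INR 2) in Hn.
  assert (HW0 : 0 < INR W) by (apply lt_0_INR; lia).
  apply (Rmult_le_reg_l (2 * INR W)); [lra|].
  rewrite <- Rmult_assoc, Rinv_r by lra. lra.
Qed.

Lemma bernoulli_pow p L : 0 <= p <= 1 -> (1 - p) ^ L * (1 + INR L * p) <= 1.
Proof.
  intros Hp. induction L as [|L IH]; [simpl; lra|].
  rewrite S_INR. change ((1 - p) ^ S L) with ((1 - p) * (1 - p) ^ L).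
  assert (0 <= (1 - p) ^ L) by (apply pow_le; lra).
  assert (0 <= INR L) by apply pos_INR.
  assert ((1 - p) * (1 + (INR L + 1) * p) <= 1 + INR L * p) by nra.
  nra.
Qed.

Lemma one_minus_pow_ge_half_min p L : 0 <= p <= 1 -> Rmin 1 (INR L * p) / 2 <= 1 - (1 - p) ^ L.
Proof.
  intros Hp. pose proof (bernoulli_pow p L Hp) as Hb. set (x := INR L * p) in *.
  assert (0 <= x) by (apply Rmult_le_pos; [apply pos_INR | lra]).
  unfold Rmin. destruct (Rle_dec 1 x); nra.
Qed.

Lemma ln_one_minus_pow_ge p L c F : 0 < p < 1 -> 0 < c -> 0 < F -> c * F <= INR L ->
  - (ln 2 + Rabs (ln c)) - Rmax 0 (- ln p - ln F) <= ln (1 - (1 - p) ^ L).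
Proof.
  intros Hp Hc HF HL.
  assert (Hx : c * F * p <= INR L * p) by (apply Rmult_le_compat_r; lra).
  assert (Hx0 : 0 < c * F * p) by (repeat apply Rmult_lt_0_compat; lra).
  assert (Hmin : 0 < Rmin 1 (INR L * p)) by (apply Rmin_pos; lra).
  assert (Hlnmin : - Rabs (ln c) - Rmax 0 (- ln p - ln F) <= ln (Rmin 1 (INR L * p))).
  { pose proof (Rabs_pos (ln c)). pose proof (Rmax_l 0 (- ln p - ln F)).
    pose proof (Rmax_r 0 (- ln p - ln F)). pose proof (Rle_abs (- ln c)). rewrite Rabs_Ropp in *.
    unfold Rmin. destruct (Rle_dec 1 (INR L * p)); [rewrite ln_1; lra|].
    pose proof (ln_le_ln _ _ Hx0 Hx). rewrite !ln_mult in * by (try apply Rmult_lt_0_compat; lra).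
    lra. }
  eapply Rle_trans; [|apply ln_le_ln, one_minus_pow_ge_half_min; lra].
  unfold Rdiv. rewrite ln_mult, ln_Rinv by lra. lra.
Qed.

Lemma ln_ratio_le p L c F K P : 0 < p < 1 -> 0 < c -> 0 < F -> c * F <= INR L ->
  (1 - (1 - p) ^ L) ^ K <= P ->
  ln P / ln p <= INR K * (Rmax 0 (1 - ln F / - ln p) + (ln 2 + Rabs (ln c)) / - ln p).
Proof.
  intros Hp Hc HF HL HP.
  assert (HD : 0 < - ln p).
  { assert (Hlt : ln p < ln 1) by (apply ln_increasing; lra). rewrite ln_1 in Hlt. lra. }
  assert (HL1 : (1 <= L)%nat).
  { apply (INR_lt 0 L). simpl. pose proof (Rmult_lt_0_compat c F Hc HF). lra. }
  assert (Hq : 0 < 1 - (1 - p) ^ L)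
    by (pose proof (one_minus_pow_mono p 1 L ltac:(lra) HL1); simpl in *; lra).
  assert (HlnP : INR K * ln (1 - (1 - p) ^ L) <= ln P)
    by (rewrite <- ln_pow by exact Hq; apply ln_le_ln; [apply pow_lt|]; auto).
  pose proof (ln_one_minus_pow_ge p L c F Hp Hc HF HL) as Hlnq.
  replace (Rmax 0 (- ln p - ln F)) with (- ln p * Rmax 0 (1 - ln F / - ln p)) in Hlnq
    by (rewrite <- RmaxRmult by lra; f_equal; field; lra).
  assert (HK : 0 <= INR K) by apply pos_INR.
  replace (ln P / ln p) with (- ln P * / - ln p) by (field; lra).
  replace (INR K * (Rmax 0 (1 - ln F / - ln p) + (ln 2 + Rabs (ln c)) / - ln p))
    with (INR K * ((ln 2 + Rabs (ln c)) + - ln p * Rmax 0 (1 - ln F / - ln p)) * / - ln p)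
    by (field; lra).
  apply Rmult_le_compat_r; [left; apply Rinv_0_lt_compat, HD|]. nra.
Qed.

Lemma rate_le_of_block_bound (F : R -> nat) (P : R -> R) (a I c : R) (K : nat) :
  0 < c -> a <= 1 ->
  to_infty0 (fun p => INR (F p)) ->
  lim0 (fun p => ln (INR (F p)) / - ln p) a ->
  lim0 (fun p => ln (P p) / ln p) I ->
  near0 (fun p => exists L : nat, c * INR (F p) <= INR L /\ (1 - (1 - p) ^ L) ^ K <= P p) ->
  I <= INR K * (1 - a).
Proof.
  intros Hc Ha HF Hz HI Hblock.
  apply (lim0_le _ _ _ HI). intros eps Heps.
  assert (HK : 0 <= INR K) by apply pos_INR.
  set (e := eps / (2 * INR K + 1)).
  assert (He : 0 < e) by (apply Rdiv_lt_0_compat; lra).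
  assert (Heps_e : 2 * INR K * e <= eps)
    by (unfold e; apply (Rmult_le_reg_r (2 * INR K + 1)); [lra|];
    field_simplify; [nra | lra]).
  refine (near0_impl _ _ _
    (near0_and _ _ (near0_and _ _ (near0_lt 1 Rlt_0_1) (HF 0))
       (near0_and _ _ (Hz e He)
          (near0_and _ _ (near0_neg_ln_large (ln 2 + Rabs (ln c)) e He) Hblock)))).
  intros p Hp [[Hp1 HFp] [Hzp [[HD HCD] [L [HL HP]]]]].
  pose proof (ln_ratio_le p L c (INR (F p)) K (P p) ltac:(lra) Hc HFp HL HP) as Hr.
  apply Rabs_def2 in Hzp.
  assert (Hmax : Rmax 0 (1 - ln (INR (F p)) / - ln p) <= 1 - a + e)
    by (apply Rmax_lub; lra).
  nra.
Qed.

Lemma rate_le_rows Z alpha I (N M : R -> nat) :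
  is_finite_zero_set Z -> alpha <= 1 ->
  to_infty0 (fun p => INR (N p)) -> to_infty0 (fun p => INR (M p)) ->
  lim0 (fun p => ln (INR (N p)) / - ln p) alpha ->
  lim0 (fun p => ln (Pspan Z (N p) (M p) p) / ln p) I ->
  I <= INR (length Z) * (1 - alpha).
Proof.
  intros HZ Ha HN HM HlN HlP.
  destruct (list_point_bounded Z) as [W HW].
  assert (HW1 : 0 < INR (S W)) by apply lt_0_INR, Nat.lt_0_succ.
  apply (rate_le_of_block_bound N (fun p => Pspan Z (N p) (M p) p) alpha I
           (/ (2 * INR (S W))) (length Z)); auto.
  { apply Rinv_0_lt_compat. lra. }
  refine (near0_impl _ _ _
    (near0_and _ _ (near0_and _ _ (HN (INR (S W))) (HM (INR (S W)))) (near0_lt 1 Rlt_0_1))).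
  intros p Hp [[HNp HMp] Hp1]. apply INR_lt in HNp, HMp.
  exists (N p / S W)%nat. split; [apply INR_div_ge; lia|].
  apply (Pspan_ge_rows Z _ _ p (S W)); auto; [lra | | apply Nat.Div0.mul_div_le | lia].
  intros z Hz. apply HW in Hz. lia.
Qed.

Lemma rate_le_cols Z beta I (N M : R -> nat) :
  is_finite_zero_set Z -> beta <= 1 ->
  to_infty0 (fun p => INR (N p)) -> to_infty0 (fun p => INR (M p)) ->
  lim0 (fun p => ln (INR (M p)) / - ln p) beta ->
  lim0 (fun p => ln (Pspan Z (N p) (M p) p) / ln p) I ->
  I <= INR (length Z) * (1 - beta).
Proof.
  intros HZ Hb HN HM HlM HlP.
  destruct (list_point_bounded Z) as [W HW].
  assert (HW1 : 0 < INR (S W)) by apply lt_0_INR, Nat.lt_0_succ.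
  apply (rate_le_of_block_bound M (fun p => Pspan Z (N p) (M p) p) beta I
           (/ (2 * INR (S W))) (length Z)); auto.
  { apply Rinv_0_lt_compat. lra. }
  refine (near0_impl _ _ _
    (near0_and _ _ (near0_and _ _ (HN (INR (S W))) (HM (INR (S W)))) (near0_lt 1 Rlt_0_1))).
  intros p Hp [[HNp HMp] Hp1]. apply INR_lt in HNp, HMp.
  exists (M p / S W)%nat. split; [apply INR_div_ge; lia|].
  apply (Pspan_ge_cols Z _ _ p (S W)); auto; [lra | | lia | apply Nat.Div0.mul_div_le].
  intros z Hz. apply HW in Hz. lia.
Qed.

Lemma rate_le_gamma Z alpha beta I (N M : R -> nat) g :
  is_finite_zero_set Z -> alpha <= 1 ->
  to_infty0 (fun p => INR (N p)) -> to_infty0 (fun p => INR (M p)) ->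
  lim0 (fun p => ln (INR (N p)) / - ln p) alpha ->
  lim0 (fun p => ln (INR (M p)) / - ln p) beta ->
  lim0 (fun p => ln (Pspan Z (N p) (M p) p) / ln p) I ->
  is_gamma Z g -> I <= INR (2 * g) * (1 - Rmin alpha beta).
Proof.
  intros HZ Ha HN HM HlN HlM HlP [[Y [HY [<- Hspan]]] _].
  destruct (list_point_bounded Y) as [B HB].
  set (W := (2 * S (length Y))%nat).
  assert (HW : 0 < INR W) by (apply lt_0_INR; unfold W; lia).
  set (F := fun p => Nat.min (N p) (M p)).
  assert (HFmin : forall p, INR (F p) = Rmin (INR (N p)) (INR (M p))) by (intros p; apply INR_min).
  apply (rate_le_of_block_bound F (fun p => Pspan Z (N p) (M p) p) (Rmin alpha beta) I
           (/ (2 * INR W)) (2 * length Y)); auto.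
  - apply Rinv_0_lt_compat. lra.
  - pose proof (Rmin_l alpha beta). lra.
  - intros K. refine (near0_impl _ _ _ (near0_and _ _ (HN K) (HM K))).
    intros p _ [HNp HMp]. rewrite HFmin. apply Rmin_glb_lt; auto.
  - refine (lim0_near_ext _ _ _ _ (lim0_Rmin _ _ _ _ HlN HlM)).
    refine (near0_impl _ _ _ (near0_and _ _ (near0_and _ _ (HN 0) (HM 0)) (near0_lt 1 Rlt_0_1))).
    intros p Hp [[HNp HMp] Hp1]. rewrite HFmin, ln_Rmin_div; auto.
    assert (Hlt : ln p < ln 1) by (apply ln_increasing; lra). rewrite ln_1 in Hlt. lra.
  - refine (near0_impl _ _ _
      (near0_and _ _ (near0_and _ _ (HN (INR (2 * B + W))) (HM (INR (2 * B + W))))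
         (near0_lt 1 Rlt_0_1))).
    intros p Hp [[HNp HMp] Hp1]. apply INR_lt in HNp, HMp.
    assert (HF : (2 * B + W <= F p)%nat) by (unfold F; lia).
    pose proof (Nat.Div0.mul_div_le (F p) W) as HWL.
    exists (F p / W)%nat. split; [apply INR_div_ge; unfold W in *; lia|].
    apply (Pspan_ge_far_witnesses Z _ _ p Y B); auto; [lra | unfold F, W in *; nia ..].
Qed.

Theorem mainTheorem15 (Z : list point) (alpha beta : R)
  (N M : R -> nat) (I : R) :
  is_finite_zero_set Z ->
  0 <= alpha <= 1 -> 0 <= beta <= 1 ->
  to_infty0 (fun p => INR (N p)) ->
  to_infty0 (fun p => INR (M p)) ->
  lim0 (fun p => ln (INR (N p)) / (- ln p)) alpha ->
  lim0 (fun p => ln (INR (M p)) / (- ln p)) beta ->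
  lim0 (fun p => ln (Pspan Z (N p) (M p) p) / ln p) I ->
  I <= (1 - Rmax alpha beta) * INR (length Z) /\
  (forall g, is_gamma Z g -> I <= 2 * (1 - Rmin alpha beta) * INR g).
Proof.
  intros HZ Ha Hb HN HM HlN HlM HlP. split.
  - pose proof (rate_le_rows Z alpha I N M HZ (proj2 Ha) HN HM HlN HlP).
    pose proof (rate_le_cols Z beta I N M HZ (proj2 Hb) HN HM HlM HlP).
    rewrite Rmult_comm. unfold Rmax. destruct (Rle_dec alpha beta); assumption.
  - intros g Hg.
    pose proof (rate_le_gamma Z alpha beta I N M g HZ (proj2 Ha) HN HM HlN HlM HlP Hg) as H.
    rewrite mult_INR in H. simpl (INR 2) in H. lra.
Qed.
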